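(* Let $u(t) = \frac{t-1}{t\log t}$ for $t>0$, $t\neq1$, $u(1)=1$, and consider on $\mathbb C^\ast = \mathbb C\setminus\{0\}$ the conformal metric $g(z,X) = \big(1 + |z|^2 u^2(|z|^2)\big)|X|^2$. Let $\kappa(z)$ denote its Gaussian curvature at $z$. Then $\kappa(z) \le 0$ for all $z \in \mathbb C^\ast$, $\kappa(z) \to -4$ as $z \to 0$, and $\kappa(z) \to 0$ as $|z| \to \infty$.
   Context: For a conformal metric $h(z)|dz|^2$ on a planar domain, the Gaussian curvature is $-2h^{-1}\,\partial^2\log h/\partial z\partial\overline z$. *)

From Stdlib Require Import Reals.
From Coquelicot Require Import Coquelicot.
Open Scope R_scope.

Definition u (t : R) : R := if Req_EM_T t 1 then 1 else (t - 1) / (t * ln t).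

(* A point z = x + i y of C is represented by (x, y); |z|^2 = x^2 + y^2. *)
Definition abs2 (x y : R) : R := x ^ 2 + y ^ 2.

(* Conformal factor h of g(z,X) = h(z)|X|^2, h(z) = 1 + |z|^2 u(|z|^2)^2. *)
Definition h (x y : R) : R := 1 + abs2 x y * (u (abs2 x y)) ^ 2.

Definition dxx (f : R -> R -> R) (x y : R) : R :=
  Derive (fun s => Derive (fun t => f t y) s) x.
Definition dyy (f : R -> R -> R) (x y : R) : R :=
  Derive (fun s => Derive (fun t => f x t) s) y.

(* For a real C^2 function f, d^2 f / dz dzbar = (1/4)(f_xx + f_yy). *)
Definition ddbar (f : R -> R -> R) (x y : R) : R := / 4 * (dxx f x y + dyy f x y).

(* Gaussian curvature of the conformal metric h |dz|^2:
   kappa = -2 h^{-1} d^2 log h / dz dzbar. *)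
Definition curvature (hh : R -> R -> R) (x y : R) : R :=
  - 2 * / hh x y * ddbar (fun a b => ln (hh a b)) x y.

Definition kappa (x y : R) : R := curvature h x y.

(* With s = ln |z|^2 one has |z|^2 u(|z|^2)^2 = sinhc(s)^2, where sinhc(s) = 2 sinh(s/2)/s,
   so h = 1 + sinhc(s)^2 depends on z only through s.  As s is harmonic with
   |grad s|^2 = 4/|z|^2, a metric e^(F(s)) |dz|^2 has curvature -2 F''(s) / (|z|^2 e^(F(s))).
   Since sinh v * v >= v^2, sinhc is log-convex, hence so is 1 + sinhc^2, and kappa <= 0.
   In terms of r = |z| and l = ln r, kappa is a rational function of r and l; it tends to
   -4 as r -> 0 because r l^4 stays bounded, and to 0 as r -> oo because 0 <= l <= r. *)

From Stdlib Require Import Reals Lra Lia Factorial.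
From Coquelicot Require Import Coquelicot.
Open Scope R_scope.

Lemma cosh_sq_sub_sinh_sq x : cosh x ^ 2 - sinh x ^ 2 = 1.
Proof.
  unfold cosh, sinh.
  assert (exp x * exp (- x) = 1) by (rewrite <- exp_plus, Rplus_opp_r; apply exp_0).
  nra.
Qed.

Lemma cosh_ge_1 x : 1 <= cosh x.
Proof.
  assert (0 < cosh x) by (unfold cosh; pose proof (exp_pos x); pose proof (exp_pos (- x)); lra).
  pose proof (cosh_sq_sub_sinh_sq x). nra.
Qed.

Lemma sqr_le_sinh_mul v : v ^ 2 <= sinh v * v.
Proof.
  destruct (MVT_gen (fun t => sinh t - t) 0 v (fun t => cosh t - 1)) as [c [_ Hc]].
  - intros t _. auto_derive; [easy | ring].
  - intros t _. apply continuity_pt_filterlim, (ex_derive_continuous (fun t => sinh t - t)).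
    auto_derive. easy.
  - unfold sinh in Hc at 2. rewrite Ropp_0, exp_0 in Hc.
    assert (Hsv : sinh v - v = (cosh c - 1) * v) by lra.
    pose proof (cosh_ge_1 c). nra.
Qed.

Lemma sinh_ln r : 0 < r -> sinh (ln r) = (r - / r) / 2.
Proof. intro Hr. unfold sinh. rewrite exp_Ropp, exp_ln by exact Hr. reflexivity. Qed.

Lemma cosh_ln r : 0 < r -> cosh (ln r) = (r + / r) / 2.
Proof. intro Hr. unfold cosh. rewrite exp_Ropp, exp_ln by exact Hr. reflexivity. Qed.

Lemma ln_sq r : 0 < r -> ln (r ^ 2) = 2 * ln r.
Proof. intro Hr. rewrite ln_pow by exact Hr. simpl. ring. Qed.

Lemma ln_le_sub_1 x : 0 < x -> ln x <= x - 1.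
Proof.
  intro Hx. pose proof (exp_ineq1_le (ln x)) as He. rewrite exp_ln in He by exact Hx. lra.
Qed.

Lemma mul_ln_pow4_le x : 0 < x <= 1 -> x * ln x ^ 4 <= 256.
Proof.
  intros [Hx Hx1]. set (v := - ln x / 4).
  assert (Hv : 0 <= v).
  { pose proof (ln_le x 1 Hx Hx1) as Hl. rewrite ln_1 in Hl. unfold v. lra. }
  assert (Hv4 : v ^ 4 <= exp v ^ 4).
  { apply pow_incr. pose proof (exp_ineq1_le v). lra. }
  assert (He4 : exp v ^ 4 = / x).
  { replace (exp v ^ 4) with (exp (v + v + v + v)) by (rewrite !exp_plus; ring).
    replace (v + v + v + v) with (- ln x) by (unfold v; field).
    rewrite exp_Ropp, exp_ln by exact Hx. reflexivity. }
  replace (ln x ^ 4) with (256 * v ^ 4) by (unfold v; field).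
  assert (x * / x = 1) by (field; lra).
  nra.
Qed.

Lemma locally_pos_of_continuous (f : R -> R) x :
  continuous f x -> 0 < f x -> locally x (fun t => 0 < f t).
Proof. intros Hc Hx. exact (Hc _ (open_gt 0 (f x) Hx)). Qed.

Lemma locally_neq_0 x : x <> 0 -> locally x (fun t => t <> 0).
Proof.
  intro Hx.
  apply (filter_imp (fun t => 0 < t ^ 2)); [intros t Ht E; subst t; simpl in Ht; lra|].
  apply locally_pos_of_continuous; [|now apply pow2_gt_0].
  apply (ex_derive_continuous (fun t => t ^ 2)). auto_derive. easy.
Qed.

Lemma is_derive_agree_off_0 (f g : R -> R) x l m : x <> 0 ->
  (forall t, t <> 0 -> f t = g t) -> is_derive f x l -> is_derive g x m -> l = m.
Proof.
  intros Hx Hfg Hf Hg.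
  assert (Hf' : is_derive g x l).
  { apply (is_derive_ext_loc f); [|exact Hf].
    apply (filter_imp _ _ (fun t => Hfg t)), locally_neq_0, Hx. }
  now rewrite <- (is_derive_unique _ _ _ Hf'), (is_derive_unique _ _ _ Hg).
Qed.

(** * The entire function sinhc *)

Definition sinhc_coef (n : nat) : R :=
  ((1/2) ^ S n - (- (1/2)) ^ S n) / INR (fact (S n)).

Lemma sinhc_coef_bound n : Rabs (sinhc_coef n) <= / INR (fact n).
Proof.
  assert (Hf : 0 < INR (fact n)) by apply INR_fact_lt_0.
  assert (Hfs : INR (fact n) <= INR (fact (S n))) by (apply le_INR; simpl; lia).
  assert (Hnum : Rabs ((1/2) ^ S n - (- (1/2)) ^ S n) <= 1).
  { eapply Rle_trans; [apply Rabs_triang|].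
    rewrite Rabs_Ropp, <- !RPow_abs, Rabs_Ropp, Rabs_pos_eq by lra.
    assert ((1/2) ^ n <= 1 ^ n) by (apply pow_incr; lra).
    rewrite pow1 in *.
    simpl. lra. }
  unfold sinhc_coef, Rdiv. rewrite Rabs_mult, Rabs_inv, (Rabs_pos_eq (INR _)) by lra.
  apply Rle_trans with (1 * / INR (fact (S n))).
  - apply Rmult_le_compat_r; [left; apply Rinv_0_lt_compat|]; lra.
  - rewrite Rmult_1_l. apply Rinv_le_contravar; lra.
Qed.

Lemma CV_radius_sinhc_coef : CV_radius sinhc_coef = p_infty.
Proof.
  assert (Hdisk : forall r, CV_disk sinhc_coef r).
  { intro r. unfold CV_disk.
    apply (@ex_series_le R_AbsRing R_CompleteNormedModule _
             (fun n => / INR (fact n) * Rabs r ^ n)).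
    - intro n. change norm with Rabs.
      rewrite Rabs_Rabsolu, Rabs_mult, <- RPow_abs.
      apply Rmult_le_compat_r; [apply pow_le, Rabs_pos | apply sinhc_coef_bound].
    - eexists. apply is_pseries_R, is_exp_Reals. }
  apply is_lub_Rbar_unique. split.
  - intros x _. exact I.
  - intros [l| |] Hl; simpl.
    + specialize (Hl (l + 1) (Hdisk _)). simpl in Hl. lra.
    + exact I.
    + exact (Hl 0 (Hdisk _)).
Qed.

(* 2 sinh (s/2) / s, extended by 1 at s = 0; the power series makes it smooth through 0. *)
Definition sinhc : R -> R := PSeries sinhc_coef.
Definition sinhc' : R -> R := PSeries (PS_derive sinhc_coef).
Definition sinhc'' : R -> R := PSeries (PS_derive (PS_derive sinhc_coef)).

Lemma is_derive_sinhc x : is_derive sinhc x (sinhc' x).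
Proof. apply is_derive_PSeries. rewrite CV_radius_sinhc_coef. exact I. Qed.

Lemma is_derive_sinhc' x : is_derive sinhc' x (sinhc'' x).
Proof.
  apply is_derive_PSeries. rewrite CV_radius_derive, CV_radius_sinhc_coef. exact I.
Qed.

Lemma sinhc_0 : sinhc 0 = 1.
Proof. unfold sinhc. rewrite PSeries_0. unfold sinhc_coef. simpl. field. Qed.

Lemma sinhc'_0 : sinhc' 0 = 0.
Proof. unfold sinhc'. rewrite PSeries_0. unfold PS_derive, sinhc_coef. simpl. field. Qed.

Lemma sinhc''_0 : sinhc'' 0 = 1/12.
Proof. unfold sinhc''. rewrite PSeries_0. unfold PS_derive, sinhc_coef. simpl. field. Qed.

Lemma sinhc_sinh x : x <> 0 -> sinhc x = 2 * sinh (x / 2) / x.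
Proof.
  intro Hx.
  set (a n := ((1/2) ^ n - (- (1/2)) ^ n) / INR (fact n)).
  assert (Ha : is_pseries a x (2 * sinh (x / 2))).
  { replace (2 * sinh (x / 2)) with (exp (x / 2) - exp (- (x / 2))) by (unfold sinh; field).
    apply is_pseries_R.
    pose proof (proj1 (is_pseries_R _ _ _) (is_exp_Reals (x / 2))) as Hp.
    pose proof (proj1 (is_pseries_R _ _ _) (is_exp_Reals (- (x / 2)))) as Hm.
    eapply is_series_ext; [|apply (is_series_minus _ _ _ _ Hp Hm)].
    intro n. unfold minus, plus, opp, a; simpl.
    replace (- (x / 2)) with (- (1/2) * x) by field.
    replace (x / 2) with (1/2 * x) by field.
    rewrite !Rpow_mult_distr. field. apply INR_fact_neq_0. }
  pose proof (is_pseries_decr_1 a x (/ x) _ (Rinv_l x Hx) Ha) as Hd.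
  unfold sinhc. change sinhc_coef with (PS_decr_1 a).
  rewrite (is_pseries_unique _ _ _ Hd). unfold a; simpl.
  unfold scal, plus, opp; simpl. unfold mult; simpl. field. exact Hx.
Qed.

Lemma sinhc'_cosh x : x <> 0 -> sinhc' x = cosh (x / 2) / x - 2 * sinh (x / 2) / x ^ 2.
Proof.
  intro Hx. apply (is_derive_agree_off_0 sinhc (fun t => 2 * sinh (t / 2) / t) x);
    [exact Hx | exact sinhc_sinh | apply is_derive_sinhc |].
  auto_derive; [exact Hx | unfold Rdiv; field; exact Hx].
Qed.

Lemma sinhc''_cosh x : x <> 0 ->
  sinhc'' x = sinh (x / 2) / (2 * x) - 2 * cosh (x / 2) / x ^ 2 + 4 * sinh (x / 2) / x ^ 3.
Proof.
  intro Hx. apply (is_derive_agree_off_0 sinhc'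
    (fun t => cosh (t / 2) / t - 2 * sinh (t / 2) / t ^ 2) x);
    [exact Hx | exact sinhc'_cosh | apply is_derive_sinhc' |].
  auto_derive.
  - rewrite Rmult_1_r. repeat split; [exact Hx | now apply Rmult_integral_contrapositive_currified].
  - unfold Rdiv. field. exact Hx.
Qed.

Lemma sinhc_log_convex x : sinhc' x ^ 2 <= sinhc x * sinhc'' x.
Proof.
  destruct (Req_dec x 0) as [->|Hx].
  { rewrite sinhc_0, sinhc'_0, sinhc''_0. lra. }
  rewrite sinhc_sinh, sinhc'_cosh, sinhc''_cosh by exact Hx.
  set (v := x / 2). pose proof (sqr_le_sinh_mul v) as Hsv.
  assert (Hv0 : v <> 0) by (unfold v; intro; apply Hx; lra).
  assert (Hv : 0 < v ^ 2) by (apply pow2_gt_0, Hv0).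
  assert (Hs : v ^ 2 <= sinh v ^ 2).
  { assert (v ^ 2 * v ^ 2 <= sinh v ^ 2 * v ^ 2) by nra. nra. }
  pose proof (cosh_sq_sub_sinh_sq v) as Hc.
  replace x with (2 * v) by (unfold v; field).
  apply Rminus_le_0.
  replace (_ - _) with ((sinh v ^ 2 - v ^ 2) / (4 * v ^ 4)
                        + (1 - (cosh v ^ 2 - sinh v ^ 2)) / (4 * v ^ 2))
    by (field; exact Hv0).
  rewrite Hc, Rminus_diag, Rdiv_0_l, Rplus_0_r.
  apply Rdiv_le_0_compat; [lra | nra].
Qed.

(** * Curvature of conformal metrics depending only on ln |z|^2 *)

Lemma is_derive_comp_ln_sq_add (F : R -> R) dF c s : 0 < s ^ 2 + c ->
  is_derive F (ln (s ^ 2 + c)) dF ->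
  is_derive (fun t => F (ln (t ^ 2 + c))) s (dF * (2 * s / (s ^ 2 + c))).
Proof.
  intros Hs HF.
  assert (Hln : is_derive (fun t => ln (t ^ 2 + c)) s (2 * s / (s ^ 2 + c))).
  { auto_derive; [exact Hs | field; lra]. }
  rewrite Rmult_comm. exact (is_derive_comp F _ s _ _ HF Hln).
Qed.

Lemma locally_sq_add_pos c x : 0 < x ^ 2 + c -> locally x (fun t => 0 < t ^ 2 + c).
Proof.
  apply (locally_pos_of_continuous (fun t => t ^ 2 + c)).
  apply (ex_derive_continuous (fun t => t ^ 2 + c)). auto_derive. easy.
Qed.

Section LogRadialCurvature.

Variables F F' F'' : R -> R.
Hypothesis is_derive_F : forall s, is_derive F s (F' s).
Hypothesis is_derive_F' : forall s, is_derive F' s (F'' s).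

Lemma Derive2_comp_ln_sq_add (g : R -> R) c x : 0 < x ^ 2 + c ->
  (forall t, 0 < t ^ 2 + c -> g t = F (ln (t ^ 2 + c))) ->
  Derive (fun s => Derive g s) x =
    F'' (ln (x ^ 2 + c)) * (2 * x / (x ^ 2 + c)) ^ 2
    + F' (ln (x ^ 2 + c)) * (2 / (x ^ 2 + c) - 4 * x ^ 2 / (x ^ 2 + c) ^ 2).
Proof.
  intros Hx Hg.
  assert (Hg' : forall s, 0 < s ^ 2 + c ->
            Derive g s = F' (ln (s ^ 2 + c)) * (2 * s / (s ^ 2 + c))).
  { intros s Hs. apply is_derive_unique.
    apply (is_derive_ext_loc (fun t => F (ln (t ^ 2 + c)))).
    - apply (filter_imp _ _ (fun t Ht => eq_sym (Hg t Ht))), locally_sq_add_pos, Hs.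
    - apply is_derive_comp_ln_sq_add; [exact Hs | apply is_derive_F]. }
  rewrite (Derive_ext_loc _ (fun s => F' (ln (s ^ 2 + c)) * (2 * s / (s ^ 2 + c))))
    by exact (filter_imp _ _ Hg' (locally_sq_add_pos c x Hx)).
  assert (Hd1 := is_derive_comp_ln_sq_add F' _ c x Hx (is_derive_F' _)).
  assert (Hd2 : is_derive (fun s => 2 * s / (s ^ 2 + c)) x
                  (2 / (x ^ 2 + c) - 4 * x ^ 2 / (x ^ 2 + c) ^ 2))
    by (auto_derive; [lra | field; lra]).
  etransitivity; [exact (is_derive_unique _ _ _ (is_derive_mult _ _ _ _ _ Hd1 Hd2 Rmult_comm))|].
  unfold plus, mult; simpl. field. lra.
Qed.

Lemma ddbar_log_radial (f : R -> R -> R) x y :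
  (forall a b, 0 < abs2 a b -> f a b = F (ln (abs2 a b))) -> 0 < abs2 x y ->
  ddbar f x y = F'' (ln (abs2 x y)) / abs2 x y.
Proof.
  unfold abs2. intros Hf Hxy. unfold ddbar, dxx, dyy.
  rewrite (Derive2_comp_ln_sq_add (fun t => f t y) (y ^ 2) x Hxy (fun t Ht => Hf t y Ht)).
  rewrite (Derive2_comp_ln_sq_add (fun t => f x t) (x ^ 2) y);
    [| lra | intros t Ht; rewrite (Rplus_comm (t ^ 2)); apply Hf; lra].
  rewrite (Rplus_comm (y ^ 2)). field. lra.
Qed.

Lemma curvature_log_radial (hh : R -> R -> R) x y :
  (forall a b, 0 < abs2 a b -> ln (hh a b) = F (ln (abs2 a b))) -> 0 < abs2 x y ->
  curvature hh x y = -2 * F'' (ln (abs2 x y)) / (abs2 x y * hh x y).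
Proof.
  intros Hh Hxy. unfold curvature. rewrite (ddbar_log_radial _ x y Hh Hxy).
  unfold Rdiv. rewrite Rinv_mult. ring.
Qed.
End LogRadialCurvature.

Lemma mul_u_sq t : 0 < t -> t * u t ^ 2 = sinhc (ln t) ^ 2.
Proof.
  intro Ht. unfold u. destruct (Req_EM_T t 1) as [->|Ht1].
  { rewrite ln_1, sinhc_0. ring. }
  revert Ht1. rewrite <- (pow2_sqrt t) by lra.
  generalize (sqrt_lt_R0 t Ht). generalize (sqrt t) as r. intros r Hr Hr1.
  assert (Hl : ln r <> 0) by (apply ln_neq_0; [intros ->; apply Hr1; ring | exact Hr]).
  rewrite ln_sq, sinhc_sinh by (try apply Rmult_integral_contrapositive_currified; lra).
  replace (2 * ln r / 2) with (ln r) by field. rewrite sinh_ln by exact Hr.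
  field. split; [lra | exact Hl].
Qed.

(* ln h (x, y) = lnh (ln (x^2 + y^2)) away from the origin. *)
Definition lnh (s : R) : R := ln (1 + sinhc s ^ 2).
Definition lnh' (s : R) : R := 2 * sinhc s * sinhc' s / (1 + sinhc s ^ 2).
Definition lnh'' (s : R) : R :=
  2 * ((sinhc s * sinhc'' s - sinhc' s ^ 2) * (1 + sinhc s ^ 2) + 2 * sinhc' s ^ 2)
    / (1 + sinhc s ^ 2) ^ 2.

Lemma one_add_sq_pos v : 0 < 1 + v ^ 2.
Proof. pose proof (pow2_ge_0 v). lra. Qed.

Lemma is_derive_lnh s : is_derive lnh s (lnh' s).
Proof.
  unfold lnh, lnh'. pose proof (one_add_sq_pos (sinhc s)).
  assert (Hd : ex_derive sinhc s) by (eexists; apply is_derive_sinhc).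
  auto_derive; [repeat split; auto; lra|].
  replace (Derive _ s) with (sinhc' s) by (symmetry; apply is_derive_unique, is_derive_sinhc).
  field. lra.
Qed.

Lemma is_derive_lnh' s : is_derive lnh' s (lnh'' s).
Proof.
  unfold lnh', lnh''. pose proof (one_add_sq_pos (sinhc s)).
  assert (Hd : ex_derive sinhc s) by (eexists; apply is_derive_sinhc).
  assert (Hd' : ex_derive sinhc' s) by (eexists; apply is_derive_sinhc').
  auto_derive; [repeat split; auto; lra|].
  replace (Derive (fun x => sinhc x) s) with (sinhc' s)
    by (symmetry; apply is_derive_unique, is_derive_sinhc).
  replace (Derive (fun x => sinhc' x) s) with (sinhc'' s)
    by (symmetry; apply is_derive_unique, is_derive_sinhc').
  field. lra.
Qed.

Lemma lnh''_ge0 s : 0 <= lnh'' s.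
Proof.
  unfold lnh''. pose proof (sinhc_log_convex s). pose proof (one_add_sq_pos (sinhc s)).
  apply Rdiv_le_0_compat; [|apply pow_lt; lra].
  pose proof (pow2_ge_0 (sinhc' s)). nra.
Qed.

Lemma abs2_pos x y : (x, y) <> (0, 0) -> 0 < abs2 x y.
Proof.
  intro Hxy. unfold abs2.
  destruct (Req_dec x 0) as [->|Hx].
  - assert (Hy : y <> 0) by (intros ->; exact (Hxy eq_refl)).
    pose proof (pow2_gt_0 y Hy). simpl. lra.
  - pose proof (pow2_gt_0 x Hx). pose proof (pow2_ge_0 y). lra.
Qed.

Lemma h_sinhc x y : 0 < abs2 x y -> h x y = 1 + sinhc (ln (abs2 x y)) ^ 2.
Proof. intro Hxy. unfold h. rewrite mul_u_sq by exact Hxy. reflexivity. Qed.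

Lemma h_ge_1 x y : 1 <= h x y.
Proof.
  unfold h, abs2. pose proof (pow2_ge_0 x). pose proof (pow2_ge_0 y).
  pose proof (pow2_ge_0 (u (x ^ 2 + y ^ 2))). nra.
Qed.

Lemma kappa_lnh x y : 0 < abs2 x y ->
  kappa x y = -2 * lnh'' (ln (abs2 x y)) / (abs2 x y * h x y).
Proof.
  apply (curvature_log_radial lnh lnh' lnh'' is_derive_lnh is_derive_lnh').
  intros a b Hab. rewrite h_sinhc by exact Hab. reflexivity.
Qed.

Lemma kappa_nonpos x y : (x, y) <> (0, 0) -> kappa x y <= 0.
Proof.
  intro Hxy. pose proof (abs2_pos x y Hxy) as Ht.
  rewrite kappa_lnh by exact Ht.
  pose proof (lnh''_ge0 (ln (abs2 x y))). pose proof (h_ge_1 x y).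
  assert (0 <= lnh'' (ln (abs2 x y)) / (abs2 x y * h x y)) by (apply Rdiv_le_0_compat; nra).
  unfold Rdiv in *. rewrite Rmult_assoc. lra.
Qed.

(* kappa in terms of r = |z| and l = ln r; W = 4 r^2 l^2 h. *)
Definition curv_rad (r l : R) : R :=
  let a := r ^ 2 - 1 in
  let W := 4 * r ^ 2 * l ^ 2 + a ^ 2 in
  -4 * ((a ^ 2 - 4 * r ^ 2 * l ^ 2) / W ^ 2
        + 8 * r ^ 2 * l ^ 2 * (l * (r ^ 2 + 1) - a) ^ 2 / W ^ 3).

Lemma lnh''_curv_rad r : 0 < r -> r <> 1 ->
  -2 * lnh'' (ln (r ^ 2)) / (r ^ 2 * (1 + sinhc (ln (r ^ 2)) ^ 2)) = curv_rad r (ln r).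
Proof.
  intros Hr Hr1.
  assert (Hl : ln r <> 0) by (apply ln_neq_0; [exact Hr1 | exact Hr]).
  assert (Hl2 : 2 * ln r <> 0) by (apply Rmult_integral_contrapositive_currified; lra).
  rewrite ln_sq by exact Hr. set (l := ln r) in *.
  assert (HS : sinhc (2 * l) = (r ^ 2 - 1) / (2 * r * l)).
  { rewrite sinhc_sinh by exact Hl2. replace (2 * l / 2) with l by field.
    unfold l. rewrite sinh_ln by exact Hr. fold l.
    field. split; [exact Hl | lra]. }
  assert (HS' : sinhc' (2 * l) = ((r ^ 2 + 1) * l - (r ^ 2 - 1)) / (4 * r * l ^ 2)).
  { rewrite sinhc'_cosh by exact Hl2. replace (2 * l / 2) with l by field.
    unfold l. rewrite sinh_ln, cosh_ln by exact Hr. fold l.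
    field. split; [exact Hl | lra]. }
  assert (HD : sinhc (2 * l) * sinhc'' (2 * l) - sinhc' (2 * l) ^ 2
               = ((r ^ 2 - 1) ^ 2 - 4 * r ^ 2 * l ^ 2) / (16 * r ^ 2 * l ^ 4)).
  { rewrite HS, HS', sinhc''_cosh by exact Hl2. replace (2 * l / 2) with l by field.
    unfold l. rewrite sinh_ln, cosh_ln by exact Hr. fold l.
    field. split; [exact Hl | lra]. }
  unfold lnh''. rewrite HD, HS'. rewrite HS.
  assert (HW : 0 < 4 * r ^ 2 * l ^ 2 + (r ^ 2 - 1) ^ 2).
  { assert (0 < r ^ 2 * l ^ 2) by (apply Rmult_lt_0_compat; apply pow2_gt_0; lra).
    pose proof (pow2_ge_0 (r ^ 2 - 1)). lra. }
  unfold curv_rad. field. split; [lra|]. split; [exact Hl|]. lra.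
Qed.

Lemma kappa_curv_rad x y : 0 < abs2 x y -> abs2 x y <> 1 ->
  kappa x y = curv_rad (sqrt (abs2 x y)) (ln (sqrt (abs2 x y))).
Proof.
  intros Ht Ht1. rewrite kappa_lnh, h_sinhc by exact Ht.
  set (r := sqrt (abs2 x y)).
  assert (Hr : 0 < r) by (apply sqrt_lt_R0, Ht).
  replace (abs2 x y) with (r ^ 2) by (apply pow2_sqrt; lra).
  apply lnh''_curv_rad; [exact Hr|].
  intros Hr1. apply Ht1. rewrite <- (pow2_sqrt (abs2 x y)) by lra. fold r. rewrite Hr1. ring.
Qed.

(** * Asymptotics of the curvature *)

Lemma Rabs_div_le n d m : 0 < d -> Rabs n <= m * d -> Rabs (n / d) <= m.
Proof.
  intros Hd H. rewrite Rabs_div, (Rabs_pos_eq d) by lra.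
  apply Rle_div_l; [lra | exact H].
Qed.

Lemma Rabs_div_le_div n d m e : 0 < d -> 0 < e -> Rabs n * e <= m * d ->
  Rabs (n / d) <= m / e.
Proof.
  intros Hd He H. apply Rabs_div_le; [exact Hd|].
  replace (m / e * d) with (m * d / e) by (field; lra).
  apply Rle_div_r; [lra | exact H].
Qed.

Lemma curv_rad_large r l : 2 <= r -> 0 <= l <= r -> Rabs (curv_rad r l) <= 2400 / r ^ 2.
Proof.
  intros Hr Hl. unfold curv_rad. cbv zeta.
  set (t := r ^ 2). set (a := t - 1). set (W := 4 * t * l ^ 2 + a ^ 2).
  assert (Ht : 4 <= t) by (unfold t; nra).
  assert (Hl2 : l ^ 2 <= t) by (unfold t; nra).
  assert (Ha : 3 / 4 * t <= a <= t) by (unfold a; lra).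
  assert (HW : a ^ 2 <= W) by (unfold W; nra).
  assert (HWt : t ^ 2 / 2 <= W) by nra.
  assert (HWp : t <= W) by nra.
  assert (HW3 : t ^ 6 <= 8 * W ^ 3).
  { assert (H3 : (t ^ 2 / 2) ^ 3 <= W ^ 3) by (apply pow_incr; nra).
    replace ((t ^ 2 / 2) ^ 3) with (t ^ 6 / 8) in H3 by field. lra. }
  assert (HT1 : Rabs ((a ^ 2 - 4 * t * l ^ 2) / W ^ 2) <= 1 / t).
  { apply Rabs_div_le_div; [nra | lra |].
    assert (Rabs (a ^ 2 - 4 * t * l ^ 2) <= W) by (apply Rabs_le; unfold W; nra).
    pose proof (Rabs_pos (a ^ 2 - 4 * t * l ^ 2)). nra. }
  assert (HT2 : Rabs (8 * t * l ^ 2 * (l * (t + 1) - a) ^ 2 / W ^ 3) <= 576 / t).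
  { apply Rabs_div_le_div; [apply pow_lt; nra | lra |].
    assert (Hb : Rabs (l * (t + 1) - a) <= 3 * t * r) by (apply Rabs_le; unfold t in *; nra).
    assert (Hb2 : (l * (t + 1) - a) ^ 2 <= 9 * t ^ 3).
    { replace (9 * t ^ 3) with ((3 * t * r) ^ 2) by (unfold t; ring).
      rewrite <- pow2_abs. apply pow_incr. split; [apply Rabs_pos | exact Hb]. }
    rewrite Rabs_pos_eq by (apply Rmult_le_pos; [nra | apply pow2_ge_0]).
    assert (8 * (t * l ^ 2) * (l * (t + 1) - a) ^ 2 <= 8 * (t * t) * (9 * t ^ 3))
      by (apply Rmult_le_compat; [nra | apply pow2_ge_0 | nra | exact Hb2]).
    replace (t ^ 6) with (t * t ^ 5) in HW3 by ring. nra. }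
  set (T1 := (a ^ 2 - 4 * t * l ^ 2) / W ^ 2) in *.
  set (T2 := 8 * t * l ^ 2 * (l * (t + 1) - a) ^ 2 / W ^ 3) in *.
  rewrite Rabs_mult, (Rabs_left (-4)) by lra.
  pose proof (Rabs_triang T1 T2).
  replace (2400 / t) with (4 * (1 / t + 576 / t) + 92 / t) by (field; lra).
  assert (0 <= 92 / t) by (apply Rdiv_le_0_compat; lra).
  lra.
Qed.

Lemma curv_rad_small r l e : e <= 1 / 4 -> r ^ 2 <= e -> r ^ 2 * l ^ 2 <= e ->
  r ^ 2 * l ^ 4 <= e -> Rabs (curv_rad r l + 4) <= 1600 * e.
Proof.
  intros He Hr Hl2 Hl4. unfold curv_rad. cbv zeta.
  set (t := r ^ 2) in *. set (a := t - 1). set (W := 4 * t * l ^ 2 + a ^ 2).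
  assert (Ht : 0 <= t) by (unfold t; apply pow2_ge_0).
  assert (Ha2 : 1 - 2 * e <= a ^ 2 <= 1).
  { replace (a ^ 2) with (1 - 2 * t + t * t) by (unfold a; ring). split; nra. }
  assert (Htl : 0 <= t * l ^ 2) by (apply Rmult_le_pos; [lra | apply pow2_ge_0]).
  assert (HW : 1 - 2 * e <= W <= 1 + 4 * e) by (unfold W; lra).
  assert (HWp : 0 < W) by lra.
  assert (HT1 : Rabs ((W ^ 2 - (a ^ 2 - 4 * t * l ^ 2)) / W ^ 2) <= 72 * e).
  { assert (HW2 : 1 / 4 <= W ^ 2) by nra.
    assert (Hn : Rabs (W ^ 2 - (a ^ 2 - 4 * t * l ^ 2)) <= 18 * e).
    { replace (W ^ 2 - (a ^ 2 - 4 * t * l ^ 2))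
        with ((W - 1) * (W + 1) + (1 - a ^ 2) + 4 * (t * l ^ 2)) by ring.
      apply Rabs_le. split; nra. }
    apply Rabs_div_le; nra. }
  assert (HT2 : Rabs (8 * t * l ^ 2 * (l * (t + 1) - a) ^ 2 / W ^ 3) <= 328 * e).
  { apply Rabs_div_le; [apply pow_lt, HWp|].
    assert (Hb : (l * (t + 1) - a) ^ 2 <= 2 * (25 / 16 * l ^ 2 + 1)).
    { assert (Hsq : (l * (t + 1) - a) ^ 2 <= 2 * (l ^ 2 * (t + 1) ^ 2) + 2 * a ^ 2)
        by (pose proof (pow2_ge_0 (l * (t + 1) + a)); nra).
      assert ((t + 1) ^ 2 <= 25 / 16) by nra.
      pose proof (pow2_ge_0 l). nra. }
    assert (HN : 8 * t * l ^ 2 * (l * (t + 1) - a) ^ 2 <= 41 * e).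
    { assert (8 * (t * l ^ 2) * (l * (t + 1) - a) ^ 2
              <= 8 * (t * l ^ 2) * (2 * (25 / 16 * l ^ 2 + 1))).
      { apply Rmult_le_compat_l; [lra | exact Hb]. }
      replace (t * l ^ 4) with (t * l ^ 2 * l ^ 2) in Hl4 by ring. nra. }
    assert (HW3 : 1 / 8 <= W ^ 3).
    { replace (1 / 8) with ((1 / 2) ^ 3) by field. apply pow_incr. lra. }
    rewrite Rabs_pos_eq by (apply Rmult_le_pos; [nra | apply pow2_ge_0]).
    nra. }
  set (T1 := (W ^ 2 - (a ^ 2 - 4 * t * l ^ 2)) / W ^ 2) in *.
  set (T2 := 8 * t * l ^ 2 * (l * (t + 1) - a) ^ 2 / W ^ 3) in *.
  replace (_ + 4) with (4 * (T1 - T2)) by (unfold T1, T2; field; lra).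
  rewrite Rabs_mult, (Rabs_pos_eq 4) by lra.
  pose proof (Rabs_triang T1 (- T2)) as Htri. rewrite Rabs_Ropp in Htri.
  unfold Rminus. lra.
Qed.

Lemma kappa_near_0 eps : 0 < eps -> exists delta, 0 < delta /\
  forall x y, (x, y) <> (0, 0) -> sqrt (abs2 x y) < delta -> Rabs (kappa x y - -4) < eps.
Proof.
  intro He. exists (Rmin (1 / 1028) (eps / 411200)). split; [apply Rmin_pos; lra|].
  intros x y Hxy Hdelta. pose proof (abs2_pos x y Hxy) as Ht.
  pose proof (Rmin_l (1 / 1028) (eps / 411200)). pose proof (Rmin_r (1 / 1028) (eps / 411200)).
  assert (Hr : 0 < sqrt (abs2 x y)) by (apply sqrt_lt_R0, Ht).
  assert (Ht1 : abs2 x y <> 1).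
  { intro E. rewrite E, sqrt_1 in Hdelta. lra. }
  rewrite kappa_curv_rad by assumption.
  set (r := sqrt (abs2 x y)) in *.
  pose proof (mul_ln_pow4_le r ltac:(lra)) as Hl4.
  set (l := ln r) in *.
  assert (Hl2 : l ^ 2 <= l ^ 4 + 1 / 4) by (pose proof (pow2_ge_0 (l ^ 2 - 1 / 2)); nra).
  (* r l^4 <= 256 makes 257 r dominate r^2, r^2 l^2 and r^2 l^4. *)
  replace (curv_rad r l - -4) with (curv_rad r l + 4) by ring.
  eapply Rle_lt_trans; [apply (curv_rad_small r l (257 * r)) | lra]; nra.
Qed.

Lemma kappa_near_infty eps : 0 < eps -> exists M,
  forall x y, M < sqrt (abs2 x y) -> Rabs (kappa x y) < eps.
Proof.
  intro He. exists (2 + 2400 / eps). intros x y HM.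
  assert (H0 : 0 <= 2400 / eps) by (apply Rdiv_le_0_compat; lra).
  set (r := sqrt (abs2 x y)) in *.
  assert (Hrt : r ^ 2 = abs2 x y).
  { apply pow2_sqrt. unfold abs2. pose proof (pow2_ge_0 x). pose proof (pow2_ge_0 y). lra. }
  rewrite kappa_curv_rad by (rewrite <- Hrt; nra). fold r.
  assert (Hl : 0 <= ln r <= r).
  { pose proof (ln_le 1 r ltac:(lra) ltac:(lra)). pose proof (ln_le_sub_1 r ltac:(lra)).
    rewrite ln_1 in *. lra. }
  eapply Rle_lt_trans; [apply curv_rad_large; lra|].
  apply Rlt_div_l; [nra|].
  assert (2400 < r * eps) by (apply Rlt_div_l; lra).
  nra.
Qed.

Theorem mainTheorem3 :
  (forall x y : R, (x, y) <> (0, 0) -> kappa x y <= 0) /\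
  (forall eps : R, 0 < eps -> exists delta : R, 0 < delta /\
     forall x y : R, (x, y) <> (0, 0) -> sqrt (abs2 x y) < delta ->
       Rabs (kappa x y - (-4)) < eps) /\
  (forall eps : R, 0 < eps -> exists M : R,
     forall x y : R, M < sqrt (abs2 x y) -> Rabs (kappa x y) < eps).
Proof.
  split; [exact kappa_nonpos | split; [exact kappa_near_0 | exact kappa_near_infty]].
Qed.
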